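(* $\mathfrak{L}(\mathrm{rtDVA}(2))\not\subseteq\bigcup_{k}\mathfrak{L}(\mathrm{rtD}k\mathrm{CA})$.
   Context: $\mathfrak{L}(A)$ denotes the class of languages recognized by machines of type $A$. A real-time deterministic vector automaton of dimension $k$ ($\mathrm{rtDVA}(k)$) is a 6-tuple $(Q,\Sigma,\delta,q_0,Q_a,v)$ with finite state set $Q$, initial state $q_0$, accept states $Q_a$, initial row vector $v\in\mathbb{Q}^k$ (freely chosen), and $\delta:Q\times(\Sigma\cup\{\cent,\$\})\times\{=,\neq\}\to Q\times S$, $S$ the set of $k\times k$ rational matrices. The input $w$ is read as $\cent w\$$ left to right, one symbol per step; in state $q$ reading $\sigma$, with $\omega$ equal to ''$=$'' iff the first vector entry equals $1$, if $\delta(q,\sigma,\omega)=(q',M)$ the machine goes to $q'$ and multiplies its row vector on the right by $M$. Acceptance: after processing $\$$, the state is in $Q_a$ and the first vector entry equals $1$. A real-time deterministic $k$-counter automaton (rtD$k$CA) is a 5-tuple $(Q,\Sigma,\delta,q_0,Q_a)$ with $k$ integer counters initially $0$, reading $\cent w\$$ one symbol per step; $\delta(q,\sigma,\theta)=(q',c)$ with $\theta\in\{0,\pm\}^k$ the zero/nonzero status of each counter and $c\in\{-1,0,1\}^k$ the counter increments; acceptance iff in an accept state after scanning $\$$. The union ranges over all $k\ge1$. *)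

From mathcomp Require Import all_boot all_order all_algebra.
Set Implicit Arguments. Unset Strict Implicit. Unset Printing Implicit Defensive.
Import GRing.Theory Num.Theory.
Local Open Scope ring_scope.

Inductive tape_sym (Sigma : Type) : Type :=
  | Cent : tape_sym Sigma
  | Dollar : tape_sym Sigma
  | Letter : Sigma -> tape_sym Sigma.
Arguments Cent {Sigma}. Arguments Dollar {Sigma}.

Definition tape (Sigma : Type) (w : seq Sigma) : seq (tape_sym Sigma) :=
  Cent :: map (@Letter Sigma) w ++ [:: Dollar].

(* First entry of a row vector (0 if the dimension is 0). *)
Definition first_entry (k : nat) (x : 'rV[rat]_k) : rat :=
  oapp (fun i : 'I_k => x ord0 i) 0 (insub 0%N).

(* A rtDVA(k) (Q, Sigma, delta, q0, Qa, v); the boolean argument of delta is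
   omega: true means "=" (first entry equals 1), false means "<>". *)
Definition dva_step (Sigma : Type) (Q : finType) (k : nat)
  (delta : Q -> tape_sym Sigma -> bool -> Q * 'M[rat]_k)
  (c : Q * 'rV[rat]_k) (s : tape_sym Sigma) : Q * 'rV[rat]_k :=
  let: (q, x) := c in
  let: (q', M) := delta q s (first_entry x == 1) in (q', x *m M).

Definition dva_accepts (Sigma : Type) (Q : finType) (k : nat)
  (delta : Q -> tape_sym Sigma -> bool -> Q * 'M[rat]_k)
  (q0 : Q) (Qa : {set Q}) (v : 'rV[rat]_k) (w : seq Sigma) : bool :=
  let: (q, x) := foldl (dva_step delta) (q0, v) (tape w) in
  (q \in Qa) && (first_entry x == 1).

Definition rtDVA_language (k : nat) (Sigma : finType) (L : pred (seq Sigma)) : Prop :=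
  exists (Q : finType) (delta : Q -> tape_sym Sigma -> bool -> Q * 'M[rat]_k)
         (q0 : Q) (Qa : {set Q}) (v : 'rV[rat]_k),
    forall w : seq Sigma, L w = dva_accepts delta q0 Qa v w.

Inductive incr : Type := Dec | Stay | Inc.
Definition incr_val (d : incr) : int :=
  match d with Dec => -1 | Stay => 0 | Inc => 1 end.

(* Status theta : true means the counter is 0, false means it is nonzero. *)
Definition ca_step (Sigma : Type) (Q : finType) (k : nat)
  (delta : Q -> tape_sym Sigma -> {ffun 'I_k -> bool} -> Q * {ffun 'I_k -> incr})
  (c : Q * {ffun 'I_k -> int}) (s : tape_sym Sigma) : Q * {ffun 'I_k -> int} :=
  let: (q, ctr) := c in
  let: (q', d) := delta q s [ffun i => ctr i == 0] in
  (q', [ffun i => ctr i + incr_val (d i)]).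

Definition ca_accepts (Sigma : Type) (Q : finType) (k : nat)
  (delta : Q -> tape_sym Sigma -> {ffun 'I_k -> bool} -> Q * {ffun 'I_k -> incr})
  (q0 : Q) (Qa : {set Q}) (w : seq Sigma) : bool :=
  (foldl (ca_step delta) (q0, [ffun => 0]) (tape w)).1 \in Qa.

Definition rtDkCA_language (k : nat) (Sigma : finType) (L : pred (seq Sigma)) : Prop :=
  exists (Q : finType)
         (delta : Q -> tape_sym Sigma -> {ffun 'I_k -> bool} -> Q * {ffun 'I_k -> incr})
         (q0 : Q) (Qa : {set Q}),
    forall w : seq Sigma, L w = ca_accepts delta q0 Qa w.

From mathcomp Require Import all_boot all_order all_algebra.
From mathcomp Require Import zify ring lra.
Set Implicit Arguments. Unset Strict Implicit. Unset Printing Implicit Defensive.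
Import GRing.Theory Num.Theory.

(* The witness language, over the letters 0, 1 (as [Some b]) and a decrement
   symbol (as [None]): starting from 1, a digit b sends x to 2x + b, the
   decrement sends x to x - 1, and a word is accepted iff it ends at 1.  The
   affine map x |-> 2x + b acts linearly on (x, 1), so two dimensions suffice
   for a vector automaton.  A counter automaton, however, reaches at most
   |Q| (2n + 3)^k configurations after reading n symbols, since every counter
   moves by at most 1 per step, while the 2^n binary words of length n are
   pairwise distinguished: u followed by (val u - 1) decrements is accepted,
   and no other word of length n followed by the same suffix is. *)

Lemma sq_le_exp2 t : (4 <= t)%N -> (t * t <= 2 ^ t)%N.
Proof.
elim: t => [|t IH] //; rewrite ltnS leq_eqVlt => /orP[/eqP <- //|Ht].
by have := IH Ht; rewrite expnS; nia.
Qed.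

Lemma exp2_gt_poly m k : exists n, (m * (n.*2.+3) ^ k < 2 ^ n)%N.
Proof.
set t := (m + 2 * k + 4)%N; exists (2 ^ t).
have t_le : (t <= 2 ^ t)%N by apply/ltnW/ltn_expl.
have base_le : ((2 ^ t).*2.+3 <= 2 ^ (t + 2))%N.
  by rewrite expnD -mul2n; move: (2 ^ t) t_le => x; lia.
have exps_le : (m + (t + 2) * k <= 2 ^ t)%N.
  by apply: leq_trans (sq_le_exp2 _); rewrite /t; nia.
apply: (@leq_ltn_trans (m * 2 ^ ((t + 2) * k))).
  apply: leq_mul => //; rewrite expnM.
  by have [->|k_gt0] := posnP k; rewrite ?expn0 ?leq_exp2r.
apply: (@leq_trans (2 ^ m * 2 ^ ((t + 2) * k))).
  by rewrite ltn_pmul2r ?expn_gt0 // ltn_expl.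
by rewrite -expnD leq_exp2l.
Qed.

Local Open Scope ring_scope.

Definition binval_step (x : rat) (s : option bool) : rat :=
  if s is Some b then 2 * x + (b : nat)%:R else x - 1.

Definition binval_lang (w : seq (option bool)) : bool :=
  foldl binval_step 1 w == 1.

Definition affine_row (x : rat) : 'rV[rat]_2 :=
  \row_j (if j == ord0 then x else 1).

Definition binval_mx (s : tape_sym (option bool)) : 'M[rat]_2 :=
  match s with
  | Letter (Some b) => \matrix_(i, j) (if i == ord0 then (if j == ord0 then 2 else 0)
                                      else (if j == ord0 then (b : nat)%:R else 1))
  | Letter None => \matrix_(i, j) (if i == ord0 then (if j == ord0 then 1 else 0)
                                  else (if j == ord0 then -1 else 1))
  | _ => 1%:M
  end.

Definition binval_delta (_ : unit) (s : tape_sym (option bool)) (_ : bool) :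
  unit * 'M[rat]_2 := (tt, binval_mx s).

Lemma affine_row_mul x s :
  affine_row x *m binval_mx (Letter s) = affine_row (binval_step x s).
Proof.
apply/rowP => j; rewrite !mxE big_ord_recl big_ord1 !mxE.
case: s => [b|]; case: j => [[|[|//]] ?]; rewrite /= ?mxE /=; lra.
Qed.

Lemma foldl_binval_delta x w :
  foldl (dva_step binval_delta) (tt, affine_row x) (map (@Letter _) w) =
  (tt, affine_row (foldl binval_step x w)).
Proof. by elim: w x => [|s w IH] x //=; rewrite -IH /dva_step /= affine_row_mul. Qed.

Lemma first_entry_affine_row x : first_entry (affine_row x) = x.
Proof. by rewrite /first_entry insubT //= mxE. Qed.

Lemma binval_lang_rtDVA2 : rtDVA_language 2 binval_lang.
Proof.
exists (unit : finType), binval_delta, tt, setT, (affine_row 1) => w.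
rewrite /dva_accepts /tape /= mulmx1 foldl_cat foldl_binval_delta /= mulmx1.
by rewrite in_setT first_entry_affine_row.
Qed.

Definition binval (x : nat) (u : seq bool) : nat :=
  foldl (fun x (b : bool) => 2 * x + b)%N x u.

Lemma foldl_binval_step_digits (x : nat) u :
  foldl binval_step x%:R (map Some u) = (binval x u)%:R.
Proof. by elim: u x => [|b u IH] x //=; rewrite -IH natrD natrM. Qed.

Lemma foldl_binval_step_nseq y j : foldl binval_step y (nseq j None) = y - j%:R.
Proof.
elim: j y => [|j IH] y /=; first by rewrite subr0.
by rewrite IH -natr1; ring.
Qed.

Lemma leq_binval x u : (x <= binval x u)%N.
Proof. by elim: u x => [|b u IH] x //=; apply: leq_trans (IH _); lia. Qed.

Lemma binval_inj x u u' : size u = size u' -> binval x u = binval x u' -> u = u'.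
Proof.
elim/last_ind: u u' => [|u b IH] u'; first by case: u'.
case/lastP: u' => [|u' b']; rewrite ?size_rcons // => /succn_inj size_eq.
rewrite /binval !foldl_rcons -/(binval x u) -/(binval x u') => val_eq.
have [prefix_eq ->] : binval x u = binval x u' /\ b = b'.
  by case: b b' val_eq => [] []; lia.
by rewrite (IH u').
Qed.

Lemma binval_lang_residual_inj u u' : size u = size u' ->
  (forall v, binval_lang (map Some u ++ v) = binval_lang (map Some u' ++ v)) ->
  u = u'.
Proof.
move=> size_eq /(_ (nseq (binval 1 u).-1 None)).
rewrite /binval_lang !foldl_cat.
rewrite (foldl_binval_step_digits 1 u) (foldl_binval_step_digits 1 u').
rewrite !foldl_binval_step_nseq -subn1 natrB ?leq_binval //.
have -> : (binval 1 u)%:R - ((binval 1 u)%:R - 1%:R) == 1 :> rat by apply/eqP; ring.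
move=> /esym/eqP val_eq; apply: (binval_inj (x := 1) size_eq).
have : (binval 1 u)%:R = (binval 1 u')%:R :> rat by lra.
by move/eqP; rewrite eqr_nat => /eqP.
Qed.

Lemma int_shift_inj (a : nat) (x y : int) : (absz x <= a)%N -> (absz y <= a)%N ->
  absz (x + a%:Z) = absz (y + a%:Z) -> x = y.
Proof. lia. Qed.

Section CounterAutomaton.
Variables (Sigma : Type) (Q : finType) (k : nat)
  (delta : Q -> tape_sym Sigma -> {ffun 'I_k -> bool} -> Q * {ffun 'I_k -> incr}).

Definition ca_conf (q0 : Q) (u : seq Sigma) : Q * {ffun 'I_k -> int} :=
  foldl (ca_step delta) (q0, [ffun => 0]) (Cent :: map (@Letter _) u).

Lemma ca_accepts_cat q0 Qa u v :
  ca_accepts delta q0 Qa (u ++ v) =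
  ((foldl (ca_step delta) (ca_conf q0 u) (map (@Letter _) v ++ [:: Dollar])).1 \in Qa).
Proof. by rewrite /ca_accepts /tape map_cat -catA /= foldl_cat. Qed.

Lemma ca_counter_bound s q (c : {ffun 'I_k -> int}) a :
  (forall i, absz (c i) <= a)%N ->
  forall i, (absz ((foldl (ca_step delta) (q, c) s).2 i) <= a + size s)%N.
Proof.
elim: s q c a => [|x s IH] q c a c_le i /=; first by rewrite addn0.
rewrite /ca_step; case: (delta q x _) => q' d.
rewrite -addSnnS; apply: IH => j; rewrite ffunE.
by have := c_le j; case: (d j) => /=; lia.
Qed.

Lemma ca_conf_counter_bound q0 u i : (absz ((ca_conf q0 u).2 i) <= (size u).+1)%N.
Proof.
have := @ca_counter_bound (Cent :: map (@Letter _) u) q0 [ffun => 0] 0.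
by rewrite /= size_map; apply=> j; rewrite ffunE.
Qed.

Lemma ca_residual_card q0 Qa (X : finType) (word : X -> seq Sigma) n :
  (forall x, size (word x) <= n)%N ->
  (forall x y, (forall v, ca_accepts delta q0 Qa (word x ++ v) =
                          ca_accepts delta q0 Qa (word y ++ v)) -> x = y) ->
  (#|X| <= #|Q| * (n.*2.+3) ^ k)%N.
Proof.
move=> size_le residual_inj.
have ctr_le x i : (absz ((ca_conf q0 (word x)).2 i) <= n.+1)%N.
  by apply: leq_trans (ca_conf_counter_bound _ _ _) _; rewrite ltnS.
pose enc x : {ffun 'I_k -> 'I_(n.+1).*2.+1} :=
  [ffun i => inord (absz ((ca_conf q0 (word x)).2 i + n.+1%:Z))].
pose F x := ((ca_conf q0 (word x)).1, enc x).
have F_inj : injective F.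
  move=> x y [state_eq /ffunP enc_eq]; apply: residual_inj => v.
  suff conf_eq : ca_conf q0 (word x) = ca_conf q0 (word y).
    by rewrite !ca_accepts_cat conf_eq.
  apply: injective_projections => //; apply/ffunP => i.
  have := congr1 val (enc_eq i); rewrite !ffunE /= !inordK; last 2 first.
  - by have := ctr_le y i; lia.
  - by have := ctr_le x i; lia.
  exact: int_shift_inj.
have := @leq_card _ _ F F_inj.
by rewrite card_prod card_ffun !card_ord doubleS.
Qed.

End CounterAutomaton.

Theorem theorem6 :
  exists (Sigma : finType) (L : pred (seq Sigma)),
    rtDVA_language 2 L /\ forall k : nat, (1 <= k)%N -> ~ rtDkCA_language k L.
Proof.
exists (option bool : finType), binval_lang; split; first exact: binval_lang_rtDVA2.
move=> k _ [Q [delta [q0 [Qa L_eq]]]].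
have [n card_lt] := exp2_gt_poly #|Q| k.
have size_le (u : n.-tuple bool) : (size (map Some u) <= n)%N.
  by rewrite size_map size_tuple.
have prefix_inj (u u' : n.-tuple bool) :
    (forall v, ca_accepts delta q0 Qa (map Some u ++ v) =
               ca_accepts delta q0 Qa (map Some u' ++ v)) -> u = u'.
  move=> residual_eq; apply/val_inj/binval_lang_residual_inj.
    by rewrite !size_tuple.
  by move=> v; rewrite !L_eq.
move: (ca_residual_card size_le prefix_inj).
by rewrite card_tuple card_bool leqNgt card_lt.
Qed.
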